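(* Let $n,m$ be positive integers with $m>1$. (a) $\nu(n)=\nu(n,m)=\lceil n/2\rceil$. (b) If $n\ge m$, then $\nu^*(n,m)=\nu(n,m)+1$ if $n$ is even and $m$ is odd, and $\nu^*(n,m)=\nu(n,m)$ otherwise. In particular, $\nu^*(n,2)=\nu^*(n)=\nu(n)$ for all $n>1$.
   Context: Let $\mathbb F_2=\{0,1\}$ be the field with two elements. For $u\in\mathbb F_2^n$, $|u|$ denotes the Hamming weight of $u$. A wiring on $n$ vertices is a matrix $W=(w_{i,j})\in M(n,n;\mathbb F_2)$ with $w_{i,i}=1$ for all $i$. The degree of vertex $j$ is the number of $1$s in the $j$th column of $W$, and $\deg(W)$ is the maximum degree over all vertices. For $c\in\mathbb F_2^n$, $M(W,c)=\max\{|Wx+c| : x\in\mathbb F_2^n\}$. For $n,m\ge1$, $A(n,m)$ is the set of wirings on $n$ vertices with $\deg(W)\le m$; for $n\ge m$, $A^*(n,m)$ is the set of wirings on $n$ vertices in which every vertex has degree exactly $m$. Define $\nu(n,m)=\min\{M(W,c): W\in A(n,m),\ c\in\mathbb F_2^n\}$, for $n\ge m$ $\nu^*(n,m)=\min\{M(W,c): W\in A^*(n,m),\ c\in\mathbb F_2^n\}$, and $\nu(n)=\nu(n,n)$, $\nu^*(n)=\nu^*(n,n)$. *)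

From mathcomp Require Import all_boot all_algebra.
Set Implicit Arguments. Unset Strict Implicit. Unset Printing Implicit Defensive.
Import GRing.Theory.
Local Open Scope ring_scope.

Definition hweight (n : nat) (u : 'cV['F_2]_n) : nat :=
  #|[set i : 'I_n | u i ord0 != 0]|.

Definition is_wiring (n : nat) (W : 'M['F_2]_n) : bool :=
  [forall i : 'I_n, W i i == 1].

Definition vdeg (n : nat) (W : 'M['F_2]_n) (j : 'I_n) : nat :=
  #|[set i : 'I_n | W i j != 0]|.

Definition wdeg (n : nat) (W : 'M['F_2]_n) : nat :=
  (\max_(j : 'I_n) vdeg W j)%N.

Definition Mval (n : nat) (W : 'M['F_2]_n) (c : 'cV['F_2]_n) : nat :=
  (\max_(x : 'cV['F_2]_n) hweight (W *m x + c))%N.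

Definition Aset (n m : nat) : pred 'M['F_2]_n :=
  fun W => is_wiring W && (wdeg W <= m)%N.

Definition Astar (n m : nat) : pred 'M['F_2]_n :=
  fun W => is_wiring W && [forall j : 'I_n, (vdeg W j == m)%N].

(* Since M(W,c) <= n
   always, the default value n of the iterated minimum is harmless whenever
   the class is nonempty (which is the case in all uses below). *)
Definition numin (n : nat) (P : pred 'M['F_2]_n) : nat :=
  (\big[minn/n]_(W : 'M['F_2]_n | P W) \big[minn/n]_(c : 'cV['F_2]_n) Mval W c)%N.

Definition nu (n m : nat) : nat := @numin n (@Aset n m).
Definition nustar (n m : nat) : nat := @numin n (@Astar n m).
Definition nu1 (n : nat) : nat := nu n n.
Definition nustar1 (n : nat) : nat := nustar n n.

(* Translating [x] by the [i]-th unit vector flips the [i]-th coordinate of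
   [W x + c] (as [W i i = 1]), so each coordinate is [1] for exactly half of
   all [x]: the average weight is [n/2], whence [M(W,c) >= ceil(n/2)].  If [n]
   is even and [M(W,c) = n/2], every weight equals [n/2]; but [|W (x + e_j) + c|]
   and [|W x + c|] differ in parity by [deg j], so all degrees are even.
   Conversely, grouping the rows into identical pairs on which [c] takes both
   values makes each pair contribute exactly one to [|W x + c|]; a few extra
   rows then fix the diagonal and the column degrees. *)

From mathcomp Require Import all_boot all_algebra zify.
Set Implicit Arguments. Unset Strict Implicit. Unset Printing Implicit Defensive.
Import GRing.Theory.
Local Open Scope ring_scope.

Lemma F2_cases (a : 'F_2) : a = 0 \/ a = 1.
Proof. by case: a => [[|[|]]] //= Ha; [left | right]; apply/val_inj. Qed.

Lemma F2_addrr (a : 'F_2) : a + a = 0.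
Proof. exact/addrr_pchar2/pchar_Fp. Qed.

Lemma F2_natb_neq0 (b : bool) : ((b%:R : 'F_2) != 0) = b.
Proof. by case: b. Qed.

Lemma F2_natb_eq1 (b : bool) : ((b%:R : 'F_2) == 1) = b.
Proof. by case: b; rewrite ?eqxx // eq_sym oner_eq0. Qed.

Lemma F2_natr_addb (a b : bool) : ((a (+) b)%:R : 'F_2) = a%:R + b%:R.
Proof. by case: a; case: b; rewrite /= ?addr0 ?add0r ?F2_addrr. Qed.

Lemma F2_natr_eq0 k : ((k%:R : 'F_2) == 0) = ~~ odd k.
Proof. by rewrite -(Fp_nat_mod (p := 2)) // modn2; case: (odd k). Qed.

Lemma F2_neq0_addr1 (a : 'F_2) : (((a + 1)%R != 0%R) + (a != 0%R))%N = 1%N.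
Proof. by case: (F2_cases a) => ->; rewrite ?add0r ?F2_addrr ?eqxx ?oner_eq0. Qed.

Lemma F2_neq0_triple (a b : 'F_2) : ((a != 0%R) + (b != 0%R) + ((a + b)%R != 0%R) <= 2)%N.
Proof.
by case: (F2_cases a) => ->; case: (F2_cases b) => ->;
  rewrite ?addr0 ?add0r ?F2_addrr ?eqxx ?oner_eq0.
Qed.

Lemma card_set_ord_sum n (p : pred nat) :
  #|[set i : 'I_n | p i]| = (\sum_(0 <= i < n) p i)%N.
Proof.
rewrite -sum1dep_card big_mkcond big_mkord /=.
by apply: eq_bigr => i _; case: (p i).
Qed.

Lemma hweightE n (u : 'cV['F_2]_n) (y : nat -> 'F_2) :
  (forall i : 'I_n, u i ord0 = y i) -> hweight u = (\sum_(0 <= i < n) (y i != 0%R))%N.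
Proof.
by move=> uy; rewrite -card_set_ord_sum; apply: eq_card => i; rewrite !inE uy.
Qed.

Lemma hweight_natr n (u : 'cV['F_2]_n) : (hweight u)%:R = \sum_i u i ord0 :> 'F_2.
Proof.
rewrite /hweight -sum1dep_card natr_sum big_mkcond /=.
by apply: eq_bigr => i _; case: (F2_cases (u i ord0)) => ->; rewrite ?eqxx ?oner_eq0.
Qed.

Lemma hweightD_natr n (u v : 'cV['F_2]_n) :
  (hweight (u + v))%:R = (hweight u)%:R + (hweight v)%:R :> 'F_2.
Proof. by rewrite !hweight_natr -big_split; apply: eq_bigr => i _; rewrite mxE. Qed.

Lemma mul_delta_mx n (W : 'M['F_2]_n) (j : 'I_n) :
  W *m delta_mx j ord0 = col j W.
Proof. by rewrite -colE. Qed.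

Lemma vdeg_hweight n (W : 'M['F_2]_n) (j : 'I_n) :
  vdeg W j = hweight (W *m delta_mx j ord0).
Proof. by apply: eq_card => i; rewrite !inE mul_delta_mx mxE. Qed.

Lemma Mval_ge n (W : 'M['F_2]_n) (c x : 'cV['F_2]_n) :
  (hweight (W *m x + c) <= Mval W c)%N.
Proof. exact: (@leq_bigmax _ (fun y => hweight (W *m y + c)) x). Qed.

Lemma hweight_le n (u : 'cV['F_2]_n) : (hweight u <= n)%N.
Proof. by rewrite -[leqRHS]card_ord max_card. Qed.

Lemma Mval_le n (W : 'M['F_2]_n) (c : 'cV['F_2]_n) : (Mval W c <= n)%N.
Proof. by apply/bigmax_leqP => x _; exact: hweight_le. Qed.

Section WiringLowerBound.

Variables (n : nat) (W : 'M['F_2]_n) (c : 'cV['F_2]_n).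
Hypothesis wiringW : is_wiring W.

Lemma card_coord_neq0 (i : 'I_n) :
  (#|[set x : 'cV['F_2]_n | (W *m x + c) i ord0 != 0]|).*2 = #|'cV['F_2]_n|.
Proof.
set A := [set x | _]; rewrite -addnn -{1}(cardsC A); congr (_ + _)%N.
have flip x : (W *m (x + delta_mx i ord0) + c) i ord0 = (W *m x + c) i ord0 + 1.
  rewrite mulmxDr addrAC [in LHS]mxE mul_delta_mx [col _ _ _ _]mxE.
  by rewrite (eqP (forallP wiringW i)).
rewrite -(@card_preimset _ _ A (addIr (delta_mx i ord0))); apply: eq_card => x.
rewrite !inE flip.
by case: (F2_cases ((W *m x + c) i ord0)) => ->; rewrite ?add0r ?F2_addrr ?eqxx ?oner_eq0.
Qed.

Lemma sum_hweight_wiring :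
  ((\sum_x hweight (W *m x + c)).*2 = n * #|'cV['F_2]_n|)%N.
Proof.
under eq_bigr do rewrite /hweight -sum1dep_card big_mkcond /=.
rewrite exchange_big /= -muln2 big_distrl /=.
under eq_bigr => i _ do rewrite -big_mkcond sum1dep_card muln2 card_coord_neq0.
by rewrite sum_nat_const card_ord.
Qed.

Lemma wiring_Mval_double_ge : (n <= (Mval W c).*2)%N.
Proof.
have N_gt0 : (0 < #|'cV['F_2]_n|)%N by apply/card_gt0P; exists 0.
rewrite -(leq_pmul2r N_gt0) -sum_hweight_wiring -doubleMl mulnC -sum_nat_const leq_double.
by apply: leq_sum => x _; exact: Mval_ge.
Qed.

Lemma wiring_Mval_ge : (uphalf n <= Mval W c)%N.
Proof. by rewrite leq_uphalf_double wiring_Mval_double_ge. Qed.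

Lemma wiring_Mval_gt_half (j : 'I_n) :
  ~~ odd n -> odd (vdeg W j) -> (n./2 < Mval W c)%N.
Proof.
move=> even_n odd_deg; rewrite ltnNge geq_half_double; apply/negP => M_le.
have M_half : (Mval W c).*2 = n by apply/eqP; rewrite eqn_leq wiring_Mval_double_ge andbT; lia.
have [_ sum_eq] := leqif_sum (fun x (_ : true) => leqif_eq (Mval_ge W c x)).
have /forall_inP const_weight : [forall (x | true), hweight (W *m x + c) == Mval W c].
  rewrite -sum_eq; apply/eqP/double_inj.
  by rewrite sum_hweight_wiring sum_nat_const doubleMr M_half mulnC.
have w0 := eqP (const_weight 0 isT); have wj := eqP (const_weight (delta_mx j ord0) isT).
move: (congr1 (fun k => k%:R : 'F_2) wj) => /eqP.
rewrite /= hweightD_natr -vdeg_hweight -w0 mulmx0 add0r -subr_eq0 addrK F2_natr_eq0.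
by rewrite odd_deg.
Qed.

End WiringLowerBound.

Lemma big_minn_le (I : finType) (P : pred I) (F : I -> nat) d i :
  P i -> (\big[minn/d]_(j | P j) F j <= F i)%N.
Proof.
rewrite unlock; have : i \in index_enum I by rewrite mem_index_enum.
elim: (index_enum I) => //= j s IHs; rewrite inE => /orP[/eqP <- -> | /IHs le_s Pi].
  exact: geq_minl.
by case: (P j); rewrite ?(leq_trans (geq_minr _ _)) ?le_s.
Qed.

Lemma numin_eq n (P : pred 'M['F_2]_n) L W0 c0 :
  (forall W c, P W -> L <= Mval W c)%N -> P W0 -> (Mval W0 c0 <= L)%N ->
  numin P = L.
Proof.
move=> L_le PW0 MW0_le; apply/eqP; rewrite eqn_leq; apply/andP; split.
  apply: leq_trans (big_minn_le _ _ PW0) _.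
  exact: leq_trans (big_minn_le _ _ (isT : predT c0)) _.
have L_le_n : (L <= n)%N := leq_trans (L_le W0 c0 PW0) (Mval_le W0 c0).
apply: (big_ind (fun v => L <= v)%N) => // [a b La Lb | W PW]; first by rewrite leq_min La.
apply: (big_ind (fun v => L <= v)%N) => // [a b La Lb | c _]; first by rewrite leq_min La.
exact: L_le.
Qed.

Lemma big_nat_double (R : Type) (idx : R) (op : Monoid.law idx) h (F : nat -> R) :
  \big[op/idx]_(0 <= i < h.*2) F i = \big[op/idx]_(0 <= k < h) op (F k.*2) (F k.*2.+1).
Proof.
elim: h => [|h IHh]; first by rewrite !big_geq.
by rewrite doubleS !big_nat_recr //= IHh Monoid.mulmA.
Qed.

Lemma sum_nat_interval a b N :
  (\sum_(0 <= k < N) (a <= k < b) = minn b N - minn a N)%N.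
Proof.
elim: N => [|N IHN]; first by rewrite big_geq // !minn0.
rewrite big_nat_recr //= IHN; case: (leqP a N) => aN; case: (ltnP N b) => Nb /=; lia.
Qed.

Section PairedWiring.

(* Rows [2k] and [2k+1], [k < h], form the [k]-th pair: they are equal, and
   [paired_vec] is [1] on the first and [0] on the second.  Column [j] meets
   the [q j] consecutive pairs starting at [pair_window j], a window containing
   pair [j/2] when [j < 2h].  The remaining rows [2h + k], [k < r], are
   [extra k]. *)
Variables (n h r : nat) (q : nat -> nat) (extra : nat -> nat -> bool).
Hypothesis size_n : n = (h.*2 + r)%N.

Definition pair_window j := minn j./2 (h - q j).

Definition in_window j k := (pair_window j <= k < pair_window j + q j)%N.

Definition paired_entry i j : bool :=
  if (i./2 < h)%N then in_window j i./2 else extra (i - h.*2) j.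

Definition paired_mx : 'M['F_2]_n := \matrix_(i, j) (paired_entry i j)%:R.

Definition paired_vec : 'cV['F_2]_n := \col_i ((i./2 < h)%N && ~~ odd i)%:R.

Definition extra_eval (x : 'cV['F_2]_n) k := \sum_(j < n) (extra k j)%:R * x j ord0.

Lemma paired_entry_extra k j : paired_entry (k + h.*2) j = extra k j.
Proof. by rewrite /paired_entry ltn_half_double ltnNge leq_addl addnK. Qed.

Lemma paired_entry_diag i : (i < h.*2)%N -> (0 < q i <= h)%N -> paired_entry i i.
Proof.
by rewrite /paired_entry /in_window /pair_window ltn_half_double => i_lt qi; rewrite i_lt; lia.
Qed.

Lemma vdeg_paired_mx (j : 'I_n) :
  (q j <= h)%N -> vdeg paired_mx j = ((q j).*2 + \sum_(k < r) extra k j)%N.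
Proof.
move=> qj_le; rewrite /vdeg (eq_card (B := [set i : 'I_n | paired_entry i j])); last first.
  by move=> i; rewrite !inE mxE F2_natb_neq0.
have pairs_le : (h.*2 <= n)%N by rewrite size_n leq_addr.
rewrite (card_set_ord_sum n (paired_entry^~ j)) (big_cat_nat (leq0n _) pairs_le) /=.
congr addn.
  rewrite big_nat_double (eq_big_nat _ _ (F2 := fun k => in_window j k + in_window j k)%N).
    by rewrite big_split /= sum_nat_interval /pair_window; lia.
  move=> k /andP[_ k_lt]; rewrite /paired_entry; congr addn.
    by rewrite doubleK k_lt.
  by rewrite -uphalfE uphalf_double k_lt.
have tail : (n - h.*2 = r)%N by rewrite size_n addKn.
rewrite -[h.*2 in LHS]add0n big_addn tail big_mkord.
by apply: eq_bigr => k _; rewrite paired_entry_extra.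
Qed.

Lemma hweight_paired (x : 'cV['F_2]_n) :
  hweight (paired_mx *m x + paired_vec) = (h + \sum_(k < r) (extra_eval x k != 0%R))%N.
Proof.
pose y i := \sum_(j < n) (paired_entry i j)%:R * x j ord0 + ((i./2 < h)%N && ~~ odd i)%:R.
rewrite (@hweightE _ _ y); last first.
  by move=> i; rewrite !mxE; congr (_ + _); apply: eq_bigr => j _; rewrite mxE.
have pairs_le : (h.*2 <= n)%N by rewrite size_n leq_addr.
rewrite (big_cat_nat (leq0n _) pairs_le) /=; congr addn.
  rewrite big_nat_double -[RHS]muln1 -[h in RHS]subn0 -sum_nat_const_nat.
  apply: eq_big_nat => k /andP[_ k_lt].
  have same_row j : paired_entry k.*2 j = paired_entry k.*2.+1 j.
    by rewrite /paired_entry -uphalfE uphalf_double doubleK k_lt.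
  rewrite /y; under eq_bigr do rewrite same_row.
  by rewrite -uphalfE uphalf_double doubleK k_lt /= !odd_double addr0 F2_neq0_addr1.
have tail : (n - h.*2 = r)%N by rewrite size_n addKn.
rewrite -[h.*2 in LHS]add0n big_addn tail big_mkord; apply: eq_bigr => k _.
rewrite /y ltn_half_double ltnNge leq_addl /= addr0.
by under eq_bigr do rewrite paired_entry_extra.
Qed.

Lemma Mval_paired_le : (Mval paired_mx paired_vec <= h + r)%N.
Proof.
apply/bigmax_leqP => x _; rewrite hweight_paired leq_add2l.
by rewrite -[leqRHS]card_ord -sum1_card leq_sum // => k _; exact: leq_b1.
Qed.

Lemma Mval_paired_le_xor :
  r = 3%N -> (forall j, extra 2 j = extra 0 j (+) extra 1 j) ->
  (Mval paired_mx paired_vec <= h + 2)%N.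
Proof.
move=> r3 extra2; apply/bigmax_leqP => x _.
rewrite hweight_paired leq_add2l r3 !big_ord_recr big_ord0 /=.
have -> : extra_eval x 2 = extra_eval x 0 + extra_eval x 1.
  by rewrite -big_split; apply: eq_bigr => j _; rewrite extra2 F2_natr_addb mulrDl.
by rewrite add0n F2_neq0_triple.
Qed.

Lemma paired_mx_Astar m :
  (forall j, j < n -> q j <= h)%N ->
  (forall j, j < h.*2 -> 0 < q j)%N ->
  (forall j, h.*2 <= j < n -> extra (j - h.*2) j)%N ->
  (forall j, j < n -> (q j).*2 + \sum_(k < r) extra k j = m)%N ->
  @Astar n m paired_mx.
Proof.
move=> q_le q_gt0 extra_diag deg_m; apply/andP; split.
  apply/forallP => i; rewrite mxE F2_natb_eq1.
  have [i_lt | i_ge] := ltnP i h.*2; first by rewrite paired_entry_diag ?q_gt0 ?q_le.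
  have := paired_entry_extra (i - h.*2) i; rewrite subnK // => ->.
  by rewrite extra_diag ?i_ge /=.
by apply/forallP => j; rewrite vdeg_paired_mx ?deg_m ?q_le.
Qed.

End PairedWiring.

Lemma Astar_witness_same_parity n m :
  (2 <= m <= n)%N -> odd n = odd m ->
  exists W c, @Astar n m W /\ (Mval W c <= uphalf n)%N.
Proof.
move=> /andP[m_ge m_le] odd_nm.
have size_n : n = (n./2.*2 + odd n)%N by rewrite addnC odd_double_half.
exists (paired_mx n n./2 (fun=> m./2) (fun _ _ => true)), (paired_vec n n./2); split.
  apply: (paired_mx_Astar size_n) => [j _ | j _ | j _ | j _].
  - exact: half_leq.
  - by rewrite half_gt0.
  - by [].
  - by rewrite sum1_card card_ord odd_nm addnC odd_double_half.
by rewrite uphalf_half addnC; exact: Mval_paired_le.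
Qed.

Lemma Astar_witness_even_odd n m :
  (2 <= m <= n)%N -> ~~ odd n -> odd m ->
  exists W c, @Astar n m W /\ (Mval W c <= n./2.+1)%N.
Proof.
move=> /andP[m_ge m_le] even_n odd_m.
have n_eq := odd_double_half n; have m_eq := odd_double_half m.
rewrite (negbTE even_n) in n_eq; rewrite odd_m in m_eq.
set h := (n./2 - 1)%N.
have size_n : n = (h.*2 + 2)%N by rewrite /h; lia.
pose extra k j := if k == 0%N then j == h.*2 else j != h.*2.
exists (paired_mx n h (fun=> m./2) extra), (paired_vec n h); split.
  apply: (paired_mx_Astar size_n) => [j _ | j _ | j /andP[j_ge j_lt] | j _].
  - rewrite /h; lia.
  - rewrite half_gt0; lia.
  - by rewrite /extra; case: (j - h.*2)%N (subnKC j_ge) => [|k] /= j_eq; apply/eqP; lia.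
  - by rewrite !big_ord_recr big_ord0 /= /extra; case: (j == h.*2) => /=; lia.
apply: leq_trans (Mval_paired_le _ _ size_n) _; rewrite /h; lia.
Qed.

Lemma Astar_witness_odd_even n m :
  (2 <= m <= n)%N -> odd n -> ~~ odd m ->
  exists W c, @Astar n m W /\ (Mval W c <= uphalf n)%N.
Proof.
move=> /andP[m_ge m_le] odd_n even_m.
have n_eq := odd_double_half n; have m_eq := odd_double_half m.
rewrite odd_n in n_eq; rewrite (negbTE even_m) in m_eq.
set h := (n./2 - 1)%N.
have size_n : n = (h.*2 + 3)%N by rewrite /h; lia.
(* A column meets two of the three extra rows if it is [wide], none otherwise;
   for [m = 2] only the extra columns are wide, so the others keep one pair. *)
pose wide j := (h.*2 <= j)%N || (4 <= m)%N.
pose extra k j :=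
  match k with 0 => wide j && (j != h.*2.+1) | 1 => j == h.*2.+1 | _ => wide j end.
exists (paired_mx n h (fun j => m./2 - wide j)%N extra), (paired_vec n h); split.
  apply: (paired_mx_Astar size_n) => [j _ | j j_lt | j /andP[j_ge j_lt] | j _].
  - rewrite /wide; case: (leqP h.*2 j); case: (leqP 4 m) => /=; rewrite /h; lia.
  - rewrite /wide (leqNgt h.*2) j_lt /=; case: (leqP 4 m) => /=; lia.
  - rewrite /extra; case: (j - h.*2)%N (subnKC j_ge) => [|[|k]] /= j_eq.
    + rewrite /wide j_ge /=; apply/eqP; lia.
    + apply/eqP; lia.
    + by rewrite /wide j_ge.
  - rewrite !big_ord_recr big_ord0 /= /extra.
    have [->|] := eqVneq j h.*2.+1; first by rewrite /wide leqnSn /=; lia.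
    by rewrite andbT; case: (wide j) => /=; lia.
apply: leq_trans (Mval_paired_le_xor _ size_n _ _) _ => //.
  move=> j; rewrite /extra /=.
  by case: eqP => [->|]; rewrite ?andbF ?andbT /wide ?leqnSn ?addbF.
rewrite uphalf_half odd_n /h; lia.
Qed.

Lemma Astar_witness n m : (2 <= m <= n)%N ->
  exists W c, @Astar n m W /\
    (Mval W c <= if ~~ odd n && odd m then n./2.+1 else uphalf n)%N.
Proof.
move=> m_range; case odd_n: (odd n); case odd_m: (odd m) => /=.
- by apply: Astar_witness_same_parity; rewrite ?odd_n ?odd_m.
- by apply: Astar_witness_odd_even; rewrite ?odd_n ?odd_m.
- by apply: Astar_witness_even_odd; rewrite ?odd_n ?odd_m.
- by apply: Astar_witness_same_parity; rewrite ?odd_n ?odd_m.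
Qed.

Lemma wdeg_Astar n m (W : 'M['F_2]_n) : @Astar n m W -> (wdeg W <= m)%N.
Proof. by case/andP=> _ /forallP deg_m; apply/bigmax_leqP => j _; rewrite (eqP (deg_m j)). Qed.

Lemma nu_eq n m : (0 < n)%N -> (minn n 2 <= m)%N -> nu n m = uphalf n.
Proof.
move=> n_gt0 m_ge; have lower W c : @Aset n m W -> (uphalf n <= Mval W c)%N.
  by case/andP=> wiringW _; exact: wiring_Mval_ge.
have [n1 | n_gt1] := leqP n 1.
  have n_eq1 : n = 1%N by apply/eqP; rewrite eqn_leq n1.
  subst n.
  apply: (numin_eq (W0 := 1%:M) (c0 := 0) lower) => /=; last exact: Mval_le.
  apply/andP; split; first by apply/forallP => i; rewrite mxE eqxx mulr1n.
  apply/bigmax_leqP => j _; apply: leq_trans m_ge.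
  by rewrite -[minn 1 2]/1%N -[X in (_ <= X)%N](card_ord 1) max_card.
have [W [c [AstarW MW_le]]] := @Astar_witness n 2 n_gt1.
apply: (numin_eq (W0 := W) (c0 := c) lower); last by move: MW_le; rewrite /= andbF.
apply/andP; split; first by case/andP: AstarW.
apply: leq_trans (wdeg_Astar AstarW) _.
by move: m_ge; rewrite (minn_idPr n_gt1).
Qed.

Lemma nustar_eq n m : (2 <= m <= n)%N ->
  nustar n m = if ~~ odd n && odd m then n./2.+1 else uphalf n.
Proof.
move=> m_range; have [W [c [AstarW MW_le]]] := Astar_witness m_range.
apply: (numin_eq (c0 := c) _ AstarW MW_le) => W' c' /andP[wiringW' /forallP deg_m].
case: ifP => [/andP[even_n odd_m] | _]; last exact: wiring_Mval_ge.
have n_gt0 : (0 < n)%N by case/andP: m_range => m_ge m_le; lia.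
apply: (wiring_Mval_gt_half c' wiringW' (j := Ordinal n_gt0) even_n).
by rewrite (eqP (deg_m _)).
Qed.

Theorem theorem3p2 :
  (forall n m : nat, (0 < n)%N -> (1 < m)%N ->
     (nu1 n = (n + 1)./2 /\ nu n m = (n + 1)./2) /\
     ((m <= n)%N ->
        nustar n m = (if ~~ odd n && odd m then (nu n m).+1 else nu n m))) /\
  (forall n : nat, (1 < n)%N -> nustar n 2 = nustar1 n /\ nustar1 n = nu1 n).
Proof.
have uphalf_eq n : (n + 1)./2 = uphalf n by rewrite addn1 uphalfE.
split=> [n m n_gt0 m_gt1 | n n_gt1].
  have nu_nm : nu n m = uphalf n by apply: nu_eq; rewrite // geq_min m_gt1 orbT.
  rewrite /nu1 !uphalf_eq nu_nm nu_eq ?geq_minl //; split=> // m_le.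
  rewrite nustar_eq ?m_gt1 // uphalf_half.
  by case: (odd n) => //=; case: (odd m).
rewrite /nustar1 /nu1 nustar_eq ?leqnn ?n_gt1 // nustar_eq ?leqnn ?n_gt1 //.
by rewrite nu_eq ?geq_minl 1?ltnW //= andbF andNb.
Qed.
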